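(* Let $V$ be a real vector space of dimension $m\ge3$ with a positive definite inner product, and let $R\neq0$ be a Jacobi-Tsankov algebraic curvature tensor on $V$ such that $r(x)<m-1$ for all $x\in V$. Then: \begin{enumerate} \item $r(x)=1$ for every $x\in S(V)$; \item $R$ is Osserman. \end{enumerate}
   Context: An algebraic curvature tensor is $R\in\otimes^4V^*$ satisfying $R(x,y,z,w)=R(z,w,x,y)=-R(y,x,z,w)$ and $R(x,y,z,w)+R(y,z,x,w)+R(z,x,y,w)=0$. The curvature operator $\mathcal{R}(x,y)$ is defined by $\langle\mathcal{R}(x,y)z,w\rangle=R(x,y,z,w)$; the Jacobi operator is $J(x):y\mapsto\mathcal{R}(y,x)x$, and $r(x)=\operatorname{Rank}J(x)$. $S(V)=\{\xi\in V:\langle\xi,\xi\rangle=1\}$. $R$ is Jacobi-Tsankov if $x\perp y$ implies $J(x)J(y)=J(y)J(x)$. $R$ is Osserman if the eigenvalues of $J(x)$ are constant for $x\in S(V)$. *)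

(* V is modelled as 'rV[R]_m (R : realType) with the standard
   (positive definite) inner product; an algebraic curvature tensor is given by
   its components T i j k l in the standard orthonormal basis. *)
From mathcomp Require Import all_boot all_order all_algebra.
From mathcomp Require Import reals.
Set Implicit Arguments. Unset Strict Implicit. Unset Printing Implicit Defensive.
Import Order.TTheory GRing.Theory Num.Theory.
Local Open Scope ring_scope.

Definition dot (R : realType) (m : nat) (x y : 'rV[R]_m) : R := (x *m y^T) 0 0.

Definition Rform (R : realType) (m : nat) (T : 'I_m -> 'I_m -> 'I_m -> 'I_m -> R)
  (x y z w : 'rV[R]_m) : R :=
  \sum_(i < m) \sum_(j < m) \sum_(k < m) \sum_(l < m)
     x 0 i * y 0 j * z 0 k * w 0 l * T i j k l.

Definition is_alg_curv_tensor (R : realType) (m : nat)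
  (T : 'I_m -> 'I_m -> 'I_m -> 'I_m -> R) : Prop :=
  forall x y z w : 'rV[R]_m,
    [/\ Rform T x y z w = Rform T z w x y,
        Rform T x y z w = - Rform T y x z w &
        Rform T x y z w + Rform T y z x w + Rform T z x y w = 0].

(* Jacobi operator J(x) : y |-> Rcal(y,x)x, as a matrix acting on row vectors:
   (y *m Jac T x) 0 l = <Rcal(y,x)x, e_l> = R(y,x,x,e_l). *)
Definition Jac (R : realType) (m : nat) (T : 'I_m -> 'I_m -> 'I_m -> 'I_m -> R)
  (x : 'rV[R]_m) : 'M[R]_m :=
  \matrix_(j < m, l < m) Rform T (delta_mx 0 j) x x (delta_mx 0 l).

Definition rJ (R : realType) (m : nat) (T : 'I_m -> 'I_m -> 'I_m -> 'I_m -> R)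
  (x : 'rV[R]_m) : nat := \rank (Jac T x).

Definition Jacobi_Tsankov (R : realType) (m : nat)
  (T : 'I_m -> 'I_m -> 'I_m -> 'I_m -> R) : Prop :=
  forall x y : 'rV[R]_m, dot x y = 0 -> Jac T x *m Jac T y = Jac T y *m Jac T x.

Definition Osserman (R : realType) (m : nat)
  (T : 'I_m -> 'I_m -> 'I_m -> 'I_m -> R) : Prop :=
  forall x y : 'rV[R]_m, dot x x = 1 -> dot y y = 1 ->
    forall a : R, eigenvalue (Jac T x) a = eigenvalue (Jac T y) a.

(* For x <> 0 the rank bound gives e <> 0 orthogonal to x with J(x) e = 0.
   The Jacobi-Tsankov condition for the orthogonal pairs x + t e and
   -t|e|^2 x + |x|^2 e, compared coefficientwise in t, shows that J(e) x = 0,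
   J(x) J(e) = 0, and yields quadratic relations between J(x), J(e) and the
   polarisation J(x, e).  With them one proves that J(u) vanishes on x^perp for
   every u in the range of J(x).  Choosing such a u with <J(u) x, x> <> 0 puts x
   in the range of J(u), so J(x) vanishes on u^perp: J(x) has rank one, with
   eigenvalues 0 and tr J(x).  Finally tr J(y) |x|^2 = tr J(x) |y|^2 whenever
   J(x) y = 0, and since m >= 3 any two unit vectors share such a kernel vector
   y, so tr J is constant on the unit sphere. *)

From mathcomp Require Import all_boot all_order all_algebra.
From mathcomp Require Import reals boolp.
From mathcomp Require Import ring lra zify.
Set Implicit Arguments. Unset Strict Implicit. Unset Printing Implicit Defensive.
Import Order.TTheory GRing.Theory Num.Theory.
Local Open Scope ring_scope.

Section InnerProduct.
Variables (R : realType) (m : nat).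
Implicit Types (x y z w u : 'rV[R]_m) (M : 'M[R]_m).

Lemma dotE x y : dot x y = \sum_i x 0 i * y 0 i.
Proof. by rewrite /dot mxE; apply: eq_bigr => i _; rewrite mxE. Qed.

Lemma dotC x y : dot x y = dot y x.
Proof. by rewrite !dotE; apply: eq_bigr => i _; rewrite mulrC. Qed.

Lemma dotDl x y z : dot (x + y) z = dot x z + dot y z.
Proof. by rewrite !dotE -big_split; apply: eq_bigr => i _; rewrite mxE mulrDl. Qed.

Lemma dotZl a x z : dot (a *: x) z = a * dot x z.
Proof. by rewrite !dotE mulr_sumr; apply: eq_bigr => i _; rewrite mxE mulrA. Qed.

Lemma dotNl x z : dot (- x) z = - dot x z.
Proof. by rewrite -scaleN1r dotZl mulN1r. Qed.

Lemma dotBl x y z : dot (x - y) z = dot x z - dot y z.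
Proof. by rewrite dotDl dotNl. Qed.

Lemma dot0l z : dot 0 z = 0.
Proof. by rewrite -(scale0r 0) dotZl mul0r. Qed.

Lemma dotDr x y z : dot z (x + y) = dot z x + dot z y.
Proof. by rewrite !(dotC z) dotDl. Qed.

Lemma dotZr a x z : dot z (a *: x) = a * dot z x.
Proof. by rewrite !(dotC z) dotZl. Qed.

Lemma dotBr x y z : dot z (x - y) = dot z x - dot z y.
Proof. by rewrite !(dotC z) dotBl. Qed.

Lemma dot0r z : dot z 0 = 0.
Proof. by rewrite dotC dot0l. Qed.

Lemma dot_perp_comb x y c d : dot x y = 0 ->
  dot (c *: x + d *: y) (c *: x + d *: y) = c ^+ 2 * dot x x + d ^+ 2 * dot y y.
Proof. by move=> xy; rewrite !(dotDl, dotDr, dotZl, dotZr) (dotC y x) xy; ring. Qed.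

Lemma dotxx_ge0 x : 0 <= dot x x.
Proof. by rewrite dotE; apply: sumr_ge0 => i _; rewrite -expr2 sqr_ge0. Qed.

Lemma dotxx_eq0 x : (dot x x == 0) = (x == 0).
Proof.
apply/idP/idP => [|/eqP->]; last by rewrite dot0l.
rewrite dotE psumr_eq0 => [/allP x0|i _]; last by rewrite -expr2 sqr_ge0.
apply/eqP/rowP => i; rewrite mxE.
by have := x0 i (mem_index_enum _); rewrite -expr2 sqrf_eq0 => /eqP.
Qed.

Lemma dotxx_gt0 x : x != 0 -> 0 < dot x x.
Proof. by move=> nx; rewrite lt_def dotxx_ge0 dotxx_eq0 nx. Qed.

Lemma unit_neq0 x : dot x x = 1 -> x != 0.
Proof. by move=> x1; rewrite -dotxx_eq0 x1 oner_neq0. Qed.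

Lemma dot_mulmx_sym x y M : M^T = M -> dot (x *m M) y = dot x (y *m M).
Proof. by move=> sM; rewrite /dot trmx_mul sM mulmxA. Qed.

Lemma row_dot_ext u v : (forall w, dot u w = dot v w) -> u = v.
Proof.
move=> uv; apply/eqP; rewrite -subr_eq0 -dotxx_eq0.
by rewrite {1}dotBl !uv -dotBl subrr dot0l.
Qed.

Lemma row_dot_eq0 u : (forall w, dot u w = 0) -> u = 0.
Proof. by move=> u0; apply: row_dot_ext => w; rewrite u0 dot0l. Qed.

Lemma mulmx_left_eq0 M : (forall v : 'rV[R]_m, v *m M = 0) -> M = 0.
Proof. by move=> M0; apply/row_matrixP => i; rewrite row0 rowE M0. Qed.

Lemma sym_mulmx2_eq0 M z : M^T = M -> z *m M *m M = 0 -> z *m M = 0.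
Proof. by move=> sM zM2; apply/eqP; rewrite -dotxx_eq0 dot_mulmx_sym // zM2 dot0r. Qed.

Lemma sym_mx2_eq0 M : M^T = M -> M *m M = 0 -> M = 0.
Proof.
move=> sM M2; apply: mulmx_left_eq0 => v.
by apply: sym_mulmx2_eq0 => //; rewrite -mulmxA M2 mulmx0.
Qed.

Lemma sym_mx3_eq0 M : M^T = M -> M *m M *m M = 0 -> M = 0.
Proof.
move=> sM M3; apply: mulmx_left_eq0 => v; apply: sym_mulmx2_eq0 => //.
by apply: sym_mulmx2_eq0 => //; rewrite -!mulmxA (mulmxA M) M3 mulmx0.
Qed.

(* [ker (M *m M) = ker M] for symmetric [M], so both have the same range. *)
Lemma sym_range_mx2 M y : M^T = M -> exists w, y *m M = w *m M *m M.
Proof.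
move=> sM.
have ker_sub : (kermx (M *m M) <= kermx M)%MS.
  apply/sub_kermxP/row_matrixP => i; rewrite row0 row_mul.
  by apply: sym_mulmx2_eq0 => //; rewrite -!row_mul -mulmxA mulmx_ker row0.
have rank_le : (\rank M <= \rank (M *m M))%N.
  have := mxrankS ker_sub; rewrite !mxrank_ker.
  have := rank_leq_row (M *m M); have := rank_leq_row M; lia.
have range_sub : (M <= M *m M)%MS.
  have [_ <-] := mxrank_leqif_sup (submxMl M M).
  by rewrite eqn_leq rank_le mxrankS // submxMl.
have : (y *m M <= M *m M)%MS by apply: submx_trans range_sub; apply: submxMl.
by case/submxP => w ->; exists w; rewrite mulmxA.
Qed.

Lemma orth_decomp x y : x != 0 -> exists c y', y = c *: x + y' /\ dot x y' = 0.
Proof.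
move=> nx; have q0 : dot x x != 0 by rewrite dotxx_eq0.
exists (dot x y / dot x x), (y - (dot x y / dot x x) *: x); split.
  by rewrite addrC subrK.
by rewrite dotBr dotZr mulfVK // subrr.
Qed.

Lemma perp_perp_colinear x z : x != 0 -> (forall y, dot x y = 0 -> dot z y = 0) ->
  z = (dot z x / dot x x) *: x.
Proof.
move=> nx zperp; have q0 : dot x x != 0 by rewrite dotxx_eq0.
pose y := z - (dot z x / dot x x) *: x.
have xy : dot x y = 0 by rewrite /y dotBr dotZr (dotC x z) mulfVK // subrr.
have : dot y y = 0 by rewrite {1}/y dotBl dotZl xy zperp // mulr0 subrr.
by move/eqP; rewrite dotxx_eq0 subr_eq0 => /eqP.
Qed.

Lemma mx_factor_perp_ker u M : u != 0 -> (forall y, dot u y = 0 -> y *m M = 0) ->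
  M = (\col_i (dot (delta_mx 0 i) u / dot u u)) *m (u *m M).
Proof.
move=> nu Mperp; have q0 : dot u u != 0 by rewrite dotxx_eq0.
apply/row_matrixP => i; rewrite row_mul [LHS]rowE.
set a := dot (delta_mx 0 i) u / dot u u.
have ud : dot u (delta_mx 0 i - a *: u) = 0.
  by rewrite dotBr dotZr (dotC u) /a mulfVK // subrr.
have := Mperp _ ud; rewrite mulmxBl => /eqP; rewrite subr_eq0 => /eqP ->.
by rewrite -scalemxAl; apply/rowP => l; rewrite !mxE big_ord1 !mxE.
Qed.

(* Polarisation: if [w M^3 w^T] vanished identically, so would [w M^2 z^T]. *)
Lemma sym_mx3_witness M : M^T = M -> M != 0 ->
  exists w, dot (w *m M *m M) (w *m M) != 0.
Proof.
move=> sM nM; apply: contrapT => Hn.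
have M30 w : dot (w *m M *m M) (w *m M) = 0.
  by apply/eqP; apply: contrapT => hw; apply: Hn; exists w; exact/negP.
have M2M0 w z : dot (w *m M *m M) (z *m M) = 0.
  have := M30 (w + z); rewrite !mulmxDl !(dotDl, dotDr) !M30 add0r addr0.
  rewrite [dot (z *m M *m M) _]dot_mulmx_sym // dotC => h.
  have : 2%:R * dot (z *m M) (w *m M *m M) = 0 by rewrite -h; ring.
  by move/eqP; rewrite mulf_eq0 pnatr_eq0 /= => /eqP.
move/eqP: nM; apply; apply: mulmx_left_eq0 => w.
by apply: sym_mulmx2_eq0 => //; apply/eqP; rewrite -dotxx_eq0 M2M0.
Qed.

End InnerProduct.

Section RankOne.
Variables (K : fieldType) (m : nat).
Implicit Types (c : 'cV[K]_m) (r : 'rV[K]_m).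

Lemma common_left_kernel n1 n2 (A : 'M[K]_(m, n1)) (B : 'M[K]_(m, n2)) :
  (\rank A + \rank B < m)%N ->
  exists z : 'rV[K]_m, [/\ z != 0, z *m A = 0 & z *m B = 0].
Proof.
move=> rAB; set C := row_mx A B.
have rC : (\rank C <= \rank A + \rank B)%N.
  rewrite -mxrank_tr /C tr_row_mx -addsmxE -(mxrank_tr A) -(mxrank_tr B).
  by case: (mxrank_adds_leqif A^T B^T).
have kerC : kermx C != 0.
  rewrite -mxrank_eq0 mxrank_ker; apply/eqP => h.
  by have := rank_leq_row C; lia.
have [i kerCi] : exists i, row i (kermx C) != 0.
  apply/existsP; move: kerC; apply: contraR; rewrite negb_exists => /forallP ker0.
  by apply/eqP/row_matrixP => i; rewrite row0; apply/eqP; have := ker0 i; rewrite negbK.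
exists (row i (kermx C)).
have /eqP := congr1 (row i) (mulmx_ker C).
by rewrite row_mul row0 mul_mx_row row_mx_eq0 => /andP [/eqP-> /eqP->].
Qed.

Lemma rank1_mx_le1 c r : (\rank (c *m r) <= 1)%N.
Proof. exact: leq_trans (mxrankM_maxl _ _) (rank_leq_col _). Qed.

Lemma rank1_mx_sqr c r : (c *m r) *m (c *m r) = \tr (c *m r) *: (c *m r).
Proof.
rewrite mxtrace_mulC trace_mx11 mulmxA -(mulmxA c r c).
set k := (r *m c) 0 0.
by rewrite [r *m c]mx11_scalar -/k mul_mx_scalar -scalemxAl.
Qed.

Lemma eigenvalue_rank1_cases c r a :
  eigenvalue (c *m r) a -> (a == 0) || (a == \tr (c *m r)).
Proof.
case/eigenvalueP => v vM nv; set k := (v *m c) 0 0.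
have vc : v *m c = k%:M by rewrite [LHS]mx11_scalar.
have vcr : v *m (c *m r) = k *: r by rewrite mulmxA vc mul_scalar_mx.
have [k0|nk] := eqVneq k 0.
  move: vM; rewrite vcr k0 scale0r => /esym/eqP.
  by rewrite scaler_eq0 (negbTE nv) orbF => ->.
apply/orP; right; apply/eqP; apply: (mulIf nk).
have := congr1 (fun M => M *m c) vM; rewrite /= vcr -!scalemxAl vc.
rewrite [r *m c]mx11_scalar -trace_mx11 -mxtrace_mulC.
by move=> /matrixP/(_ 0 0); rewrite !mxE /= !mulr1n mulrC => ->.
Qed.

Lemma eigenvalue0_rank1 c r : (1 < m)%N -> eigenvalue (c *m r) 0.
Proof.
move=> m_gt1.
have [|z [nz zcr _]] := @common_left_kernel _ _ (c *m r) (0 : 'M[K]_m).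
  by rewrite mxrank0 addn0; apply: leq_ltn_trans (rank1_mx_le1 c r) m_gt1.
by apply/eigenvalueP; exists z => //; rewrite zcr scale0r.
Qed.

Lemma eigenvalue_tr_rank1 c r : (1 < m)%N -> eigenvalue (c *m r) (\tr (c *m r)).
Proof.
move=> m_gt1; have [->|nt] := eqVneq (\tr (c *m r)) 0; first exact: eigenvalue0_rank1.
apply/eigenvalueP; exists r.
  by rewrite mulmxA [r *m c]mx11_scalar mul_scalar_mx -trace_mx11 -mxtrace_mulC.
by apply: contra nt => /eqP->; rewrite mulmx0 mxtrace0.
Qed.

Lemma eigenvalue_rank1 c r a : (1 < m)%N ->
  eigenvalue (c *m r) a = (a == 0) || (a == \tr (c *m r)).
Proof.
move=> m_gt1; apply/idP/idP => [|/orP[]/eqP->]; first exact: eigenvalue_rank1_cases.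
  exact: eigenvalue0_rank1.
exact: eigenvalue_tr_rank1.
Qed.

End RankOne.

Lemma perp_left_kernel (R : realType) m (M : 'M[R]_m) (x : 'rV[R]_m) :
  (\rank M < m.-1)%N -> exists e, [/\ e != 0, dot x e = 0 & e *m M = 0].
Proof.
move=> rM; have [|z [nz zM zx]] := @common_left_kernel _ _ _ _ M x^T.
  by have := rank_leq_col x^T; lia.
by exists z; split=> //; rewrite dotC /dot zx mxE.
Qed.

Lemma mx_cubic_eq0 (R : realFieldType) m n (C1 C2 C3 : 'M[R]_(m, n)) :
  (forall t : R, t *: C1 + t ^+ 2 *: C2 + t ^+ 3 *: C3 = 0) ->
  [/\ C1 = 0, C2 = 0 & C3 = 0].
Proof.
move=> C0.
have C0ij i j : [/\ C1 i j = 0, C2 i j = 0 & C3 i j = 0].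
  have /matrixP/(_ i j) := C0 1; have /matrixP/(_ i j) := C0 (-1).
  have /matrixP/(_ i j) := C0 2; rewrite !mxE => h1 h2 h3.
  by split; nra.
by split; apply/matrixP => i j; rewrite mxE; case: (C0ij i j).
Qed.

Section CurvatureTensor.
Variables (R : realType) (m : nat) (T : 'I_m -> 'I_m -> 'I_m -> 'I_m -> R).
Implicit Types (x y z w a b u v : 'rV[R]_m).
Local Notation F := (Rform T).
Local Notation J := (Jac T).

Lemma Rform_linear1 c x1 x2 y z w :
  F (c *: x1 + x2) y z w = c * F x1 y z w + F x2 y z w.
Proof.
rewrite /Rform mulr_sumr -big_split; apply: eq_bigr => i _.
rewrite mulr_sumr -big_split; apply: eq_bigr => j _.
rewrite mulr_sumr -big_split; apply: eq_bigr => k _.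
rewrite mulr_sumr -big_split; apply: eq_bigr => l _.
by rewrite !mxE /=; ring.
Qed.

Definition Jpol a b : 'M[R]_m :=
  \matrix_(j, l) (F (delta_mx 0 j) a b (delta_mx 0 l) + F (delta_mx 0 j) b a (delta_mx 0 l)).

Hypothesis HT : is_alg_curv_tensor T.

Lemma Rform_pair x y z w : F x y z w = F z w x y.
Proof. by case: (HT x y z w). Qed.

Lemma Rform_skew12 x y z w : F x y z w = - F y x z w.
Proof. by case: (HT x y z w). Qed.

Lemma Rform_bianchi x y z w : F x y z w + F y z x w + F z x y w = 0.
Proof. by case: (HT x y z w). Qed.

Lemma Rform_skew34 x y z w : F x y z w = - F x y w z.
Proof. by rewrite Rform_pair Rform_skew12 Rform_pair. Qed.

Lemma Rform_rev x y z w : F x y z w = F w z y x.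
Proof. by rewrite Rform_pair Rform_skew12 Rform_skew34 opprK. Qed.

Lemma Rform_linear2 c x y1 y2 z w :
  F x (c *: y1 + y2) z w = c * F x y1 z w + F x y2 z w.
Proof. by rewrite Rform_skew12 Rform_linear1 (Rform_skew12 y1) (Rform_skew12 y2); ring. Qed.

Lemma Rform_linear3 c x y z1 z2 w :
  F x y (c *: z1 + z2) w = c * F x y z1 w + F x y z2 w.
Proof. by rewrite Rform_pair Rform_linear1 (Rform_pair z1) (Rform_pair z2). Qed.

Lemma Rform_linear4 c x y z w1 w2 :
  F x y z (c *: w1 + w2) = c * F x y z w1 + F x y z w2.
Proof.
by rewrite Rform_skew34 Rform_linear3 (Rform_skew34 _ _ _ w1) (Rform_skew34 _ _ _ w2); ring.
Qed.

Lemma Rform01 y z w : F 0 y z w = 0.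
Proof.
have := Rform_linear1 1 0 0 y z w; rewrite scale1r addr0 mul1r.
by move/(congr1 (fun t => t - F 0 y z w)); rewrite subrr addrK.
Qed.

Lemma Rform02 x z w : F x 0 z w = 0.
Proof. by rewrite Rform_skew12 Rform01 oppr0. Qed.

Lemma Rform03 x y w : F x y 0 w = 0.
Proof. by rewrite Rform_pair Rform01. Qed.

Lemma Rform04 x y z : F x y z 0 = 0.
Proof. by rewrite Rform_pair Rform02. Qed.

Lemma RformD1 x1 x2 y z w : F (x1 + x2) y z w = F x1 y z w + F x2 y z w.
Proof. by rewrite -(scale1r x1) Rform_linear1 mul1r scale1r. Qed.

Lemma RformD2 x y1 y2 z w : F x (y1 + y2) z w = F x y1 z w + F x y2 z w.
Proof. by rewrite -(scale1r y1) Rform_linear2 mul1r scale1r. Qed.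

Lemma RformD3 x y z1 z2 w : F x y (z1 + z2) w = F x y z1 w + F x y z2 w.
Proof. by rewrite -(scale1r z1) Rform_linear3 mul1r scale1r. Qed.

Lemma RformD4 x y z w1 w2 : F x y z (w1 + w2) = F x y z w1 + F x y z w2.
Proof. by rewrite -(scale1r w1) Rform_linear4 mul1r scale1r. Qed.

Lemma RformZ1 c x y z w : F (c *: x) y z w = c * F x y z w.
Proof. by rewrite -(addr0 (c *: x)) Rform_linear1 Rform01 addr0. Qed.

Lemma RformZ2 c x y z w : F x (c *: y) z w = c * F x y z w.
Proof. by rewrite -(addr0 (c *: y)) Rform_linear2 Rform02 addr0. Qed.

Lemma RformZ3 c x y z w : F x y (c *: z) w = c * F x y z w.
Proof. by rewrite -(addr0 (c *: z)) Rform_linear3 Rform03 addr0. Qed.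

Lemma RformZ4 c x y z w : F x y z (c *: w) = c * F x y z w.
Proof. by rewrite -(addr0 (c *: w)) Rform_linear4 Rform04 addr0. Qed.

Lemma Rform_xx x z w : F x x z w = 0.
Proof.
have /eqP := Rform_skew12 x x z w.
by rewrite -subr_eq0 opprK -mulr2n mulrn_eq0 /= => /eqP.
Qed.

Lemma Rform_sum1 (G : 'I_m -> 'rV[R]_m) y z w :
  F (\sum_j G j) y z w = \sum_j F (G j) y z w.
Proof. by elim/big_rec2: _ => [|j s1 s2 _ <-]; rewrite ?Rform01 ?RformD1. Qed.

Lemma Rform_sum4 (G : 'I_m -> 'rV[R]_m) x y z :
  F x y z (\sum_j G j) = \sum_j F x y z (G j).
Proof. by elim/big_rec2: _ => [|j s1 s2 _ <-]; rewrite ?Rform04 ?RformD4. Qed.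

Lemma dot_Jac a v w : dot (a *m J v) w = F a v v w.
Proof.
have Jrow l : (a *m J v) 0 l = F a v v (delta_mx 0 l).
  rewrite mxE {2}(row_sum_delta a) Rform_sum1; apply: eq_bigr => j _.
  by rewrite RformZ1 mxE.
rewrite dotE {2}(row_sum_delta w) Rform_sum4; apply: eq_bigr => l _.
by rewrite RformZ4 Jrow mulrC.
Qed.

Lemma Jac_sym v : (J v)^T = J v.
Proof. by apply/matrixP => j l; rewrite !mxE Rform_rev. Qed.

Lemma dot_Jac_sym a b v : dot (a *m J v) b = dot a (b *m J v).
Proof. exact/dot_mulmx_sym/Jac_sym. Qed.

Lemma Jpol_sym a b : (Jpol a b)^T = Jpol a b.
Proof.
by apply/matrixP => j l; rewrite !mxE addrC; congr (_ + _); apply: Rform_rev.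
Qed.

Lemma JpolC a b : Jpol a b = Jpol b a.
Proof. by apply/matrixP => j l; rewrite !mxE addrC. Qed.

Lemma JacD a b : J (a + b) = J a + Jpol a b + J b.
Proof. by apply/matrixP => j l; rewrite !mxE !(RformD2, RformD3); ring. Qed.

Lemma Jac_comb c d a b :
  J (c *: a + d *: b) = c ^+ 2 *: J a + (c * d) *: Jpol a b + d ^+ 2 *: J b.
Proof. by apply/matrixP => j l; rewrite !mxE !(RformD2, RformD3, RformZ2, RformZ3); ring. Qed.

Lemma JacZ c a : J (c *: a) = c ^+ 2 *: J a.
Proof. by apply/matrixP => j l; rewrite !mxE !(RformZ2, RformZ3); ring. Qed.

Lemma Jac0 : J 0 = 0.
Proof. by apply/matrixP => j l; rewrite !mxE Rform02. Qed.

Lemma mulmx_Jac_self v : v *m J v = 0.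
Proof. by apply: row_dot_eq0 => w; rewrite dot_Jac Rform_xx. Qed.

Lemma dot_Jpol a u v w : dot (a *m Jpol u v) w = F a u v w + F a v u w.
Proof.
have -> : Jpol u v = J (u + v) - J u - J v.
  by apply/matrixP => j l; rewrite !mxE !(RformD2, RformD3); ring.
by rewrite !mulmxBr !dotBl !dot_Jac !(RformD2, RformD3); ring.
Qed.

Lemma mulmx_Jpoll a b : a *m Jpol a b = - (b *m J a).
Proof.
apply: row_dot_ext => w.
by rewrite dot_Jpol dotNl dot_Jac Rform_xx (Rform_skew12 a b a w); ring.
Qed.

Lemma mulmx_Jpolr a b : b *m Jpol a b = - (a *m J b).
Proof. by rewrite JpolC mulmx_Jpoll. Qed.

(* If [F x y y w] vanishes, [F] is skew in its two middle slots, and the Bianchi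
   identity becomes [3 F x y z w = 0]. *)
Lemma Rform_eq0_of_Jac : (forall v, J v = 0) -> forall x y z w, F x y z w = 0.
Proof.
move=> J0 x y z w.
have F0 u y' w' : F u y' y' w' = 0 by rewrite -dot_Jac J0 mulmx0 dot0l.
have Fskew u y' z' w' : F u y' z' w' = - F u z' y' w'.
  have := F0 u (y' + z') w'; rewrite !(RformD2, RformD3) !F0 add0r addr0.
  by move/eqP; rewrite addr_eq0 => /eqP.
have := Rform_bianchi x y z w.
rewrite (Rform_skew12 y z) (Fskew z y x) opprK (Rform_skew12 z x) (Fskew x z y) opprK => F3.
have : 3%:R * F x y z w = 0 by rewrite -F3; ring.
by move/eqP; rewrite mulf_eq0 pnatr_eq0 /= => /eqP.
Qed.

End CurvatureTensor.

Ltac mxexpand := repeat progress rewrite ?mulmxDl ?mulmxDr ?mulmxBl ?mulmxBr ?mulmxN ?mulNmx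
  -?scalemxAl -?scalemxAr ?scalerA ?mulmxA ?expr1n ?mulr1 ?scale1r ?mul1r ?dotDl ?dotBl ?dotNl
  ?dotZl ?mul0mx ?mulmx0 ?scaler0 ?addr0 ?add0r ?oppr0 ?dot0l.

Section JacobiTsankov.
Variables (R : realType) (m : nat) (T : 'I_m -> 'I_m -> 'I_m -> 'I_m -> R).
Hypothesis HT : is_alg_curv_tensor T.
Hypothesis HJT : Jacobi_Tsankov T.
Implicit Types (x y z w u v a b e : 'rV[R]_m).
Local Notation J := (Jac T).
Local Notation S := (Jpol T).

(* The Jacobi-Tsankov identity for the orthogonal pair [x + e], [p x - q e],
   applied to [e], gives [(q^2 + p q) x J(e)^2 = 0]. *)
Lemma Jac_ker_swap x e : x != 0 -> dot x e = 0 -> e *m J x = 0 -> x *m J e = 0.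
Proof.
move=> nx xe eJx; set p := dot e e; set q := dot x x; set u := x *m J e.
have q_gt0 : 0 < q := dotxx_gt0 nx.
have ab : dot (1 *: x + 1 *: e) (p *: x + (- q) *: e) = 0.
  by rewrite !(dotDl, dotDr, dotZl, dotZr) (dotC e x) xe -/p -/q; ring.
have uJx : u *m J x = 0.
  by rewrite /u -mulmxA -(HJT xe) mulmxA (mulmx_Jac_self HT) mul0mx.
have := congr1 (mulmx e) (HJT ab); rewrite !(Jac_comb HT).
mxexpand; rewrite eJx (mulmx_Jpolr HT) (mulmx_Jac_self HT) -/u; mxexpand.
rewrite uJx; mxexpand => /addrI/eqP.
rewrite -subr_eq0 -scalerBl scaler_eq0 oppr_eq0 => /orP[|/eqP uJe].
  have p_ge0 : 0 <= p := dotxx_ge0 e.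
  by rewrite gt_eqF //; nra.
exact: sym_mulmx2_eq0 (Jac_sym HT e) uJe.
Qed.

Lemma Jac_Jpol_comm z a b : dot z a = 0 -> dot z b = 0 -> J z *m S a b = S a b *m J z.
Proof.
move=> za zb; have zab : dot z (a + b) = 0 by rewrite dotDr za zb addr0.
have := HJT zab; rewrite (JacD HT) !mulmxDr !mulmxDl (HJT za) (HJT zb).
by move/addIr/addrI.
Qed.

Lemma Jac_ker_mul_eq0 x e : x != 0 -> dot x e = 0 -> e *m J x = 0 ->
  J e *m J x = 0 /\ J x *m J e = 0.
Proof.
move=> nx xe eJx; have xJe := Jac_ker_swap nx xe eJx.
have perpJ y : dot x y = 0 -> y *m J e *m J x = 0.
  move=> xy; have := congr1 (mulmx e) (Jac_Jpol_comm xy xe).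
  rewrite !mulmxA eJx mul0mx (mulmx_Jpolr HT) mulNmx.
  by move/esym/eqP; rewrite oppr_eq0 => /eqP.
have JeJx : J e *m J x = 0.
  apply: mulmx_left_eq0 => y; have [c [y' [-> xy']]] := orth_decomp y nx.
  by rewrite mulmxA !mulmxDl -!scalemxAl xJe mul0mx scaler0 add0r perpJ.
by split=> //; rewrite -(Jac_sym HT x) -(Jac_sym HT e) -trmx_mul JeJx trmx0.
Qed.

Lemma Jac_ker_pencil x e t : x != 0 -> dot x e = 0 -> e *m J x = 0 ->
  [/\ 1 *: x + t *: e != 0,
      dot (1 *: x + t *: e) ((- (t * dot e e)) *: x + dot x x *: e) = 0 &
      ((- (t * dot e e)) *: x + dot x x *: e) *m J (1 *: x + t *: e) = 0].
Proof.
move=> nx xe eJx; have xJe := Jac_ker_swap nx xe eJx.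
split.
- rewrite -dotxx_eq0 dot_perp_comb // gt_eqF // expr1n mul1r.
  have := mulr_ge0 (sqr_ge0 t) (dotxx_ge0 e); have := dotxx_gt0 nx; lra.
- by rewrite !(dotDl, dotDr, dotZl, dotZr) (dotC e x) xe; ring.
- rewrite (Jac_comb HT); mxexpand.
  by rewrite !(mulmx_Jac_self HT) (mulmx_Jpoll HT) (mulmx_Jpolr HT) eJx xJe; mxexpand.
Qed.

(* The coefficients of [t] and [t^2] in [J a *m J b = 0], for the pair [a, b]
   of [Jac_ker_pencil]. *)
Lemma Jpol_relations x e : x != 0 -> dot x e = 0 -> e *m J x = 0 ->
  dot x x *: (S x e *m J e) = dot e e *: (J x *m S x e) /\
  (dot e e * dot x x) *: (S x e *m S x e) =
    dot e e ^+ 2 *: (J x *m J x) + dot x x ^+ 2 *: (J e *m J e).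
Proof.
move=> nx xe eJx; set p := dot e e; set q := dot x x.
have [JeJx JxJe] := Jac_ker_mul_eq0 nx xe eJx.
have pencil t : t *: (q ^+ 2 *: (S x e *m J e) - (p * q) *: (J x *m S x e)) +
    t ^+ 2 *: (p ^+ 2 *: (J x *m J x) - (p * q) *: (S x e *m S x e)
               + q ^+ 2 *: (J e *m J e)) +
    t ^+ 3 *: (p ^+ 2 *: (S x e *m J x) - (p * q) *: (J e *m S x e)) = 0.
  have [na ab bJa] := Jac_ker_pencil t nx xe eJx.
  have [_ <-] := Jac_ker_mul_eq0 na ab bJa.
  rewrite !(Jac_comb HT); mxexpand; rewrite JeJx JxJe; mxexpand.
  by apply/matrixP => j l; rewrite !mxE /= -/p -/q; ring.
have [c1 c2 _] := mx_cubic_eq0 pencil.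
have q0 : q != 0 by rewrite dotxx_eq0.
split.
- apply: (scalerI q0); rewrite !scalerA.
  by move/eqP: c1; rewrite subr_eq0 => /eqP; rewrite expr2 (mulrC p q) => ->.
- by move/eqP: c2; rewrite addrAC subr_eq0 eq_sym => /eqP.
Qed.

Lemma Jac_range_ker x w n : x != 0 -> dot x n = 0 -> n *m J x = 0 ->
  n *m J (w *m J x) = 0.
Proof.
move=> nx xn nJx; have [->|nn] := eqVneq n 0; first by rewrite mul0mx.
have [_ JxJn] := Jac_ker_mul_eq0 nx xn nJx.
apply: Jac_ker_swap nn _ _; last by rewrite -mulmxA JxJn mulmx0.
by rewrite dotC (dot_Jac_sym HT) nJx dot0r.
Qed.

End JacobiTsankov.

Section RankOneJacobi.
Variables (R : realType) (m : nat) (T : 'I_m -> 'I_m -> 'I_m -> 'I_m -> R).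
Hypothesis HT : is_alg_curv_tensor T.
Hypothesis HJT : Jacobi_Tsankov T.
Hypothesis HR : ~ (forall x y z w : 'rV[R]_m, Rform T x y z w = 0).
Hypothesis perp_ker :
  forall x : 'rV[R]_m, exists e, [/\ e != 0, dot x e = 0 & e *m Jac T x = 0].
Implicit Types (x y z w u v e : 'rV[R]_m).
Local Notation J := (Jac T).
Local Notation S := (Jpol T).

Lemma Jac_neq0 x : x != 0 -> J x != 0.
Proof.
move=> nx; apply/eqP => Jx0; apply: HR; apply: (Rform_eq0_of_Jac HT) => y.
have [c [e [-> xe]]] := orth_decomp y nx.
have [->|ne] := eqVneq e 0; first by rewrite addr0 (JacZ HT) Jx0 scaler0.
have eJx : e *m J x = 0 by rewrite Jx0 mulmx0.
have [rel1 rel2] := Jpol_relations HT HJT nx xe eJx.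
have q0 : dot x x != 0 by rewrite dotxx_eq0.
have p0 : dot e e != 0 by rewrite dotxx_eq0.
rewrite Jx0 ?mul0mx ?mulmx0 ?scaler0 ?add0r in rel1 rel2.
have SJe : S x e *m J e = 0 by move/eqP: rel1; rewrite scaler_eq0 (negbTE q0) => /eqP.
have Je0 : J e = 0.
  apply: (sym_mx3_eq0 (Jac_sym HT e)).
  have := congr1 (mulmx^~ (J e)) rel2; rewrite /= -!scalemxAl -mulmxA SJe mulmx0 scaler0.
  by move/esym/eqP; rewrite scaler_eq0 expf_eq0 (negbTE q0) andbF => /eqP.
have S0 : S x e = 0.
  apply: (sym_mx2_eq0 (Jpol_sym HT x e)); move/eqP: rel2.
  by rewrite Je0 mulmx0 scaler0 scaler_eq0 mulf_eq0 (negbTE q0) (negbTE p0) => /eqP.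
by rewrite -[e]scale1r (Jac_comb HT) Jx0 S0 Je0 !scaler0 !addr0.
Qed.

Lemma Jac_mul_Jac_range x w : x != 0 -> J x *m J (w *m J x) = 0.
Proof.
move=> nx; set u := w *m J x.
have [e [ne xe eJx]] := perp_ker x.
have [rel1 rel2] := Jpol_relations HT HJT nx xe eJx.
have p0 : dot e e != 0 by rewrite dotxx_eq0.
have [JeJx JxJe] := Jac_ker_mul_eq0 HT HJT nx xe eJx.
have xJe := Jac_ker_swap HT HJT nx xe eJx.
have nJu n : dot x n = 0 -> n *m J x = 0 -> n *m J u = 0 := Jac_range_ker HT HJT w nx.
have xu : dot x u = 0 by rewrite dotC (dot_Jac_sym HT) (mulmx_Jac_self HT) dot0r.
have JxJu := HJT xu.
have ux : dot u x = 0 by rewrite dotC.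
have ue : dot u e = 0 by rewrite (dot_Jac_sym HT) eJx dot0r.
have JuS := Jac_Jpol_comm HT HJT ux ue.
apply: mulmx_left_eq0 => v; rewrite mulmxA; set y := v *m J x *m J u.
have yS : y *m S x e = 0.
  apply: (scalerI p0); rewrite scaler0.
  have -> : y *m S x e = v *m (J x *m S x e) *m J u by rewrite /y -!mulmxA JuS.
  rewrite scalemxAl scalemxAr -rel1 -scalemxAr -scalemxAl !mulmxA.
  have n0 : v *m S x e *m J e *m J u = 0.
    apply: nJu; last by rewrite -mulmxA JeJx mulmx0.
    by rewrite dotC (dot_Jac_sym HT) xJe dot0r.
  by rewrite n0 scaler0.
have yJe : y *m J e = 0 by rewrite /y -(mulmxA v) JxJu -!mulmxA JxJe !mulmx0.
have yJx : y *m J x = 0.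
  apply: (sym_mulmx2_eq0 (Jac_sym HT x)).
  have := congr1 (mulmx y) rel2; rewrite -!scalemxAr !mulmxA yS mul0mx scaler0.
  rewrite mulmxDr -!scalemxAr !mulmxA yJe mul0mx scaler0 addr0 => /esym/eqP.
  by rewrite scaler_eq0 expf_eq0 (negbTE p0) andbF => /eqP.
apply/eqP; rewrite -dotxx_eq0; apply/eqP.
by rewrite {1}/y -mulmxA JxJu mulmxA (dot_Jac_sym HT) yJx dot0r.
Qed.

Lemma Jac_range_perp x w y : x != 0 -> dot x y = 0 -> y *m J (w *m J x) = 0.
Proof.
move=> nx xy; have [v yJx] := sym_range_mx2 y (Jac_sym HT x).
pose n := y - v *m J x.
have nJx : n *m J x = 0 by rewrite /n mulmxBl yJx subrr.
have xn : dot x n = 0.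
  by rewrite /n dotBr xy (dotC x) (dot_Jac_sym HT) (mulmx_Jac_self HT) dot0r subrr.
have -> : y = v *m J x + n by rewrite /n addrC subrK.
rewrite mulmxDl -mulmxA (Jac_mul_Jac_range w nx) mulmx0 add0r.
exact (Jac_range_ker HT HJT w nx xn nJx).
Qed.

(* Choosing [u] in the range of [J x] with [<J u x, x> <> 0] puts [x] in the
   range of [J u]; then [J x] kills [u^perp]. *)
Lemma Jac_rank1_factor x : exists (c : 'cV[R]_m) (r : 'rV[R]_m), J x = c *m r.
Proof.
have [->|nx] := eqVneq x 0; first by exists 0, 0; rewrite (Jac0 HT) mul0mx.
have [w ww] := sym_mx3_witness (Jac_sym HT x) (Jac_neq0 nx).
set u := w *m J x in ww.
have nu : u != 0 by apply: contra ww => /eqP->; rewrite mul0mx dot0l.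
have xJu : x *m J u = (dot (x *m J u) x / dot x x) *: x.
  apply: perp_perp_colinear => // y xy.
  by rewrite (dot_Jac_sym HT) Jac_range_perp // dot0r.
set mu := _ / _ in xJu.
have q0 : dot x x != 0 by rewrite dotxx_eq0.
have mu0 : mu != 0.
  rewrite /mu mulf_eq0 invr_eq0 (negbTE q0) orbF.
  by rewrite (dot_Jac HT) (Rform_pair HT) -(dot_Jac HT).
have x_range : x = (mu^-1 *: x) *m J u.
  by rewrite -scalemxAl xJu scalerA mulVf // scale1r.
exists (\col_i (dot (delta_mx 0 i) u / dot u u)), (u *m J x).
apply: (mx_factor_perp_ker nu) => y uy.
by rewrite x_range; exact (Jac_range_perp (mu^-1 *: x) nu uy).
Qed.

Lemma Jac_sqr x : J x *m J x = \tr (J x) *: J x.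
Proof. by have [c [r ->]] := Jac_rank1_factor x; rewrite rank1_mx_sqr. Qed.

Lemma Jac_mul_Jpol_neq0 x e : x != 0 -> e != 0 -> dot x e = 0 -> e *m J x = 0 ->
  J x *m S x e != 0.
Proof.
move=> nx ne xe eJx; apply/eqP => JxS.
have SJx : S x e *m J x = 0.
  by rewrite -(Jac_sym HT x) -(Jpol_sym HT x e) -trmx_mul JxS trmx0.
have [_ rel2] := Jpol_relations HT HJT nx xe eJx.
have [JeJx _] := Jac_ker_mul_eq0 HT HJT nx xe eJx.
have := congr1 (mulmx^~ (J x)) rel2; rewrite /= mulmxDl -!scalemxAl -!mulmxA.
rewrite SJx JeJx !mulmx0 !scaler0 addr0 => /esym/eqP.
rewrite scaler_eq0 expf_eq0 dotxx_eq0 (negbTE ne) andbF /= => /eqP Jx3.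
have Jx0 : J x = 0 by apply: (sym_mx3_eq0 (Jac_sym HT x)); rewrite -mulmxA.
by move: (Jac_neq0 nx); rewrite Jx0 eqxx.
Qed.

Lemma trJac_perp_ker x e : x != 0 -> dot x e = 0 -> e *m J x = 0 ->
  \tr (J x) * dot e e = \tr (J e) * dot x x.
Proof.
move=> nx xe eJx.
have [->|ne] := eqVneq e 0; first by rewrite dot0l (Jac0 HT) mxtrace0 mulr0 mul0r.
have [rel1 _] := Jpol_relations HT HJT nx xe eJx.
have JxS0 := Jac_mul_Jpol_neq0 nx ne xe eJx.
set p := dot e e in rel1 *; set q := dot x x in rel1 *.
have p0 : p != 0 by rewrite dotxx_eq0.
set X := J x *m S x e in rel1 JxS0 *; set Y := S x e *m J e in rel1 *.
set Z := X *m J e.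
have JxRel : (p * \tr (J x)) *: X = q *: Z.
  have := congr1 (mulmx (J x)) rel1; rewrite /= -!scalemxAr !mulmxA Jac_sqr.
  by rewrite -scalemxAl scalerA => <-.
have RelJe : p *: Z = (q * \tr (J e)) *: Y.
  have := congr1 (mulmx^~ (J e)) rel1; rewrite /= -!scalemxAl -!mulmxA Jac_sqr.
  by rewrite -scalemxAr scalerA => ->; rewrite mulmxA.
have : (p * (p * \tr (J x))) *: X = (q * \tr (J e) * p) *: X.
  rewrite -[LHS]scalerA JxRel scalerA (mulrC p q) -[(q * p) *: Z]scalerA RelJe scalerA.
  by rewrite (mulrC q (q * _)) -[(q * _ * q) *: Y]scalerA rel1 scalerA.
move/eqP; rewrite -subr_eq0 -scalerBl scaler_eq0 (negbTE JxS0) orbF => /eqP h.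
by apply: (mulfI p0); apply/eqP; rewrite -subr_eq0; apply/eqP; rewrite -h; ring.
Qed.

Lemma trJpol_perp_ker x e : x != 0 -> dot x e = 0 -> e *m J x = 0 -> \tr (S x e) = 0.
Proof.
move=> nx xe eJx.
have [->|ne] := eqVneq e 0.
  suff -> : S x 0 = 0 by rewrite mxtrace0.
  by apply/matrixP => j l; rewrite !mxE (Rform03 HT) (Rform02 HT) addr0.
have [na ab bJa] := Jac_ker_pencil HT HJT 1 nx xe eJx.
have := trJac_perp_ker na ab bJa; have := trJac_perp_ker nx xe eJx.
rewrite !(Jac_comb HT) !mxtraceD !mxtraceZ !dot_perp_comb //.
set p := dot e e; set q := dot x x; set s := \tr (S x e).
set rx := \tr (J x); set re := \tr (J e) => H0 /eqP; rewrite -subr_eq0 => /eqP H1.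
have H0' : rx * p - re * q = 0 by rewrite H0 subrr.
(* The previous lemma for the pair of [Jac_ker_pencil] at [t = 1]: modulo
   [rx p = re q] it reads [2 p q (p + q) s = 0]. *)
have := congr2 (fun a b => a - (p + q) * (q - p) * b) H1 H0'.
rewrite /= mulr0 subr0 => h.
have : (p + q) * (2 * p * q) * s = 0 by rewrite -h; ring.
have p_gt0 := dotxx_gt0 ne; have q_gt0 := dotxx_gt0 nx.
have pq_gt0 : 0 < (p + q) * (2 * p * q) by rewrite !(mulr_gt0, addr_gt0) ?ltr0n.
by move/eqP; rewrite mulf_eq0 gt_eqF //= => /eqP.
Qed.

Lemma trJac_ker x y : x != 0 -> y *m J x = 0 ->
  \tr (J y) * dot x x = \tr (J x) * dot y y.
Proof.
move=> nx; have [c [e [-> xe]]] := orth_decomp y nx; move=> yJx.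
have eJx : e *m J x = 0.
  by move: yJx; rewrite mulmxDl -scalemxAl (mulmx_Jac_self HT) scaler0 add0r.
have := trJac_perp_ker nx xe eJx; have := trJpol_perp_ker nx xe eJx.
rewrite -[e in c *: x + e]scale1r (Jac_comb HT) !mxtraceD !mxtraceZ dot_perp_comb //.
by rewrite !expr1n !mul1r => -> ?; rewrite mulr0 addr0; nra.
Qed.

Lemma rJ_unit x : dot x x = 1 -> rJ T x = 1%N.
Proof.
move=> x1; have nx := unit_neq0 x1; have [c [r Jcr]] := Jac_rank1_factor x.
apply/eqP; rewrite /rJ eqn_leq lt0n mxrank_eq0 Jac_neq0 // andbT Jcr.
exact: rank1_mx_le1.
Qed.

Lemma trJac_unit x y : (2 < m)%N -> dot x x = 1 -> dot y y = 1 -> \tr (J x) = \tr (J y).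
Proof.
move=> m_gt2 x1 y1.
have [cx [rx Jx]] := Jac_rank1_factor x; have [cy [ry Jy]] := Jac_rank1_factor y.
have [|z [nz zJx zJy]] := @common_left_kernel _ _ _ _ (J x) (J y).
  have r2 := leq_add (rank1_mx_le1 cx rx) (rank1_mx_le1 cy ry).
  by rewrite Jx Jy; apply: leq_ltn_trans r2 m_gt2.
have := trJac_ker (unit_neq0 x1) zJx; have := trJac_ker (unit_neq0 y1) zJy.
rewrite x1 y1 !mulr1 => Hy Hx; have z0 : dot z z != 0 by rewrite dotxx_eq0.
by apply: (mulIf z0); rewrite -Hx -Hy.
Qed.

Lemma Jac_Osserman : (2 < m)%N -> Osserman T.
Proof.
move=> m_gt2 x y x1 y1 a; have m_gt1 : (1 < m)%N by apply: ltnW.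
have [cx [rx Jx]] := Jac_rank1_factor x; have [cy [ry Jy]] := Jac_rank1_factor y.
by rewrite Jx Jy !eigenvalue_rank1 // -Jx -Jy (trJac_unit m_gt2 x1 y1).
Qed.

End RankOneJacobi.

Theorem lemma2p4 (R : realType) (m : nat) (T : 'I_m -> 'I_m -> 'I_m -> 'I_m -> R) :
  (3 <= m)%N ->
  is_alg_curv_tensor T ->
  ~ (forall x y z w : 'rV[R]_m, Rform T x y z w = 0) ->
  Jacobi_Tsankov T ->
  (forall x : 'rV[R]_m, (rJ T x < m.-1)%N) ->
  (forall x : 'rV[R]_m, dot x x = 1 -> rJ T x = 1%N) /\ Osserman T.
Proof.
move=> m_ge3 HT HR HJT rJ_lt.
have perp_ker x : exists e, [/\ e != 0, dot x e = 0 & e *m Jac T x = 0].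
  exact: perp_left_kernel (rJ_lt x).
split; [exact: rJ_unit HT HJT HR perp_ker | exact: Jac_Osserman HT HJT HR perp_ker m_ge3].
Qed.
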